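(* For every $C>1$ there is $n_C\in\mathbb N$ such that the following holds. Every $C$-bipartite-Ramsey graph $G=(V_1,V_2,E)$ with $|V_1|,|V_2|\ge n_C$ has at least $2|V_1|/3$ vertices $v\in V_1$ with $(32C)^{-1}|V_2|\le d_G(v)\le (1-(32C)^{-1})|V_2|$.
   Context: A bipartite graph $G=(V_1,V_2,E)$ has vertex set $V_1\sqcup V_2$ and edge set $E\subset V_1\times V_2$; $d_G(v)$ is the degree of $v$. Given $C>0$, $G$ is called $C$-bipartite-Ramsey if for all integers $t_1\ge C\log_2|V_1|$ and $t_2\ge C\log_2|V_2|$ there are no $T_1\subset V_1$, $T_2\subset V_2$ with $|T_1|=t_1$, $|T_2|=t_2$ such that all pairs in $T_1\times T_2$ are edges, or all are non-edges. *)

From mathcomp Require Import all_boot.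
From Stdlib Require Import Reals.
Set Implicit Arguments. Unset Strict Implicit. Unset Printing Implicit Defensive.

Definition log2 (x : R) : R := (ln x / ln 2)%R.

Definition deg1 (V1 V2 : finType) (E : V1 -> V2 -> bool) (v : V1) : nat :=
  #|[set y | E v y]|.

Definition bipartite_ramsey (C : R) (V1 V2 : finType) (E : V1 -> V2 -> bool)
  : Prop :=
  forall t1 t2 : nat,
    (INR t1 >= C * log2 (INR #|V1|))%R ->
    (INR t2 >= C * log2 (INR #|V2|))%R ->
    ~ exists (T1 : {set V1}) (T2 : {set V2}),
        #|T1| = t1 /\ #|T2| = t2 /\
        ((forall x y, x \in T1 -> y \in T2 -> E x y) \/
         (forall x y, x \in T1 -> y \in T2 -> ~~ E x y)).

From mathcomp Require Import all_boot zify.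
From Stdlib Require Import Reals Lra.
Set Implicit Arguments. Unset Strict Implicit. Unset Printing Implicit Defensive.

(* Let A be the set of vertices of V1 of degree below |V2|/(32C), and suppose
   |A| > |V1|/6.  Choosing vertices of one side greedily, each time one with the
   fewest neighbours among the surviving candidates of the other side, k steps
   keep a fraction (1-q)^k >= exp(-2qk) of the candidates, q being twice the
   relative degree bound.  If |V2| <= |V1|, choose k2 ~ C log2 |V2| vertices of
   V2: about |V1|^(3/4)/6 vertices of A survive.  If |V1| < |V2|, first drop
   the vertices of V2 with more than |A|/(16C) neighbours in A (at most half of
   them, by Markov), then choose k1 ~ C log2 |V1| vertices of A: about
   |V2|^(1/2)/2 vertices of V2 survive.  Either way we get an empty bipartite
   pair of sizes (k1, k2), contradicting the Ramsey property.  Applied to G and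
   to its bipartite complement, this bounds both tails of the degree
   distribution by |V1|/6. *)

Definition deg_in (T1 T2 : finType) (E : T1 -> T2 -> bool) (Y : {set T2}) (x : T1) : nat :=
  #|Y :&: [set y | E x y]|.

Definition transpose (T1 T2 : Type) (E : T1 -> T2 -> bool) : T2 -> T1 -> bool :=
  fun y x => E x y.

Definition anticomplete (T1 T2 : finType) (E : T1 -> T2 -> bool)
    (W : {set T1}) (T : {set T2}) : Prop :=
  forall x y, x \in W -> y \in T -> ~~ E x y.

Lemma deg_in_sum (T1 T2 : finType) (E : T1 -> T2 -> bool) (Y : {set T2}) x :
  deg_in E Y x = \sum_(y in Y) E x y.
Proof.
rewrite /deg_in -sum1_card big_mkcond [RHS]big_mkcond /=.
by apply: eq_bigr => y _; rewrite !inE; case: (y \in Y); case: (E x y).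
Qed.

Section Bipartite.

Variables (T1 T2 : finType) (E : T1 -> T2 -> bool).

Lemma deg_inT x : deg_in E [set: T2] x = deg1 E x.
Proof. by rewrite /deg_in setTI. Qed.

Lemma deg_inS (Y Y' : {set T2}) x : Y' \subset Y -> (deg_in E Y' x <= deg_in E Y x)%nat.
Proof. by move=> sY'Y; apply/subset_leq_card/setSI. Qed.

Lemma sum_deg_in_transpose (W : {set T1}) (Y : {set T2}) :
  \sum_(y in Y) deg_in (transpose E) W y = \sum_(x in W) deg_in E Y x.
Proof.
under eq_bigr do rewrite deg_in_sum.
by rewrite exchange_big; apply: eq_bigr => x _; rewrite deg_in_sum.
Qed.

Lemma deg1_compl v : deg1 (fun x y => ~~ E x y) v = (#|T2| - deg1 E v)%nat.
Proof.
rewrite /deg1 -(cardsC [set y | E v y]) addKn.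
by apply: eq_card => y; rewrite !inE.
Qed.

Lemma anticompleteS (W W' : {set T1}) (T T' : {set T2}) :
  W' \subset W -> T' \subset T -> anticomplete E W T -> anticomplete E W' T'.
Proof.
move=> /subsetP sW /subsetP sT WT x y xW yT.
exact: WT (sW x xW) (sT y yT).
Qed.

Lemma anticomplete_transpose (W : {set T1}) (T : {set T2}) :
  anticomplete (transpose E) T W -> anticomplete E W T.
Proof. by move=> TW x y xW yT; exact: TW yT xW. Qed.

End Bipartite.

Lemma subset_card_eq (T : finType) (A : {set T}) k :
  (k <= #|A|)%nat -> exists2 B : {set T}, B \subset A & #|B| = k.
Proof.
elim: k => [|k IH] k_le; first by exists set0; rewrite ?sub0set ?cards0.
have [B sBA cB] := IH (ltnW k_le).
have : (0 < #|A :\: B|)%nat by rewrite cardsD (setIidPr sBA) cB subn_gt0.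
case/card_gt0P => x; rewrite inE => /andP [xB xA].
exists (x |: B); first by rewrite subUset sub1set xA.
by rewrite cardsU1 xB cB.
Qed.

Lemma leq_sum_subset (I : finType) (P Q : {pred I}) (F : I -> nat) :
  {subset P <= Q} -> (\sum_(i in P) F i <= \sum_(i in Q) F i)%nat.
Proof. by move=> sPQ; apply: sub_le_big => // x y; exact: leq_addr. Qed.

Lemma bipartite_ramsey_compl (C : R) (V1 V2 : finType) (E : V1 -> V2 -> bool) :
  bipartite_ramsey C E -> bipartite_ramsey C (fun x y => ~~ E x y).
Proof.
move=> ramsey t1 t2 t1_ge t2_ge [T1 [T2 [cT1 [cT2 hom]]]].
apply: (ramsey t1 t2 t1_ge t2_ge); exists T1, T2; do 2!split => //.
by case: hom => hom; [right | left] => x y xT1 yT2; move: (hom x y xT1 yT2) => // /negPn.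
Qed.

Local Open Scope R_scope.

Lemma leq_INR m n : (m <= n)%nat -> INR m <= INR n.
Proof. by move/leP; exact: le_INR. Qed.

Lemma INR_leq m n : INR m <= INR n -> (m <= n)%nat.
Proof. by move/INR_le/leP. Qed.

Lemma ramsey_anticomplete_small (C : R) (V1 V2 : finType) (E : V1 -> V2 -> bool)
    (t1 t2 : nat) (W : {set V1}) (T : {set V2}) :
  bipartite_ramsey C E ->
  C * log2 (INR #|V1|) <= INR t1 -> C * log2 (INR #|V2|) <= INR t2 ->
  anticomplete E W T -> (t1 <= #|W|)%nat -> (#|T| < t2)%nat.
Proof.
move=> ramsey t1_ge t2_ge WT t1W; rewrite ltnNge; apply/negP => t2T.
have [W' sW'W cW'] := subset_card_eq t1W.
have [T' sT'T cT'] := subset_card_eq t2T.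
apply: (ramsey t1 t2 (Rle_ge _ _ t1_ge) (Rle_ge _ _ t2_ge)).
by exists W', T'; do 2!split => //; right; exact: anticompleteS WT.
Qed.

Lemma Rle_div_r (a b c : R) : 0 < c -> c * a <= b -> a <= b / c.
Proof.
move=> c_pos cab; apply: (Rmult_le_reg_l c) => //.
by have -> : c * (b / c) = b by field; lra.
Qed.

Lemma Rle_div_l (a b c : R) : 0 < c -> b <= c * a -> b / c <= a.
Proof.
move=> c_pos bca; apply: (Rmult_le_reg_l c) => //.
by have -> : c * (b / c) = b by field; lra.
Qed.

Lemma INR_sum_le (I : finType) (P : {pred I}) (F : I -> nat) (c : R) :
  (forall i, i \in P -> INR (F i) <= c) -> INR (\sum_(i in P) F i) <= INR #|P| * c.
Proof.
move=> F_le; rewrite -sum1_card.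
apply: (big_rec2 (fun a b => INR a <= INR b * c)) => [|i a b Pi IH]; first by simpl; lra.
have := F_le i Pi; rewrite !plus_INR /=; lra.
Qed.

Lemma INR_sum_ge (I : finType) (P : {pred I}) (F : I -> nat) (c : R) :
  (forall i, i \in P -> c <= INR (F i)) -> INR #|P| * c <= INR (\sum_(i in P) F i).
Proof.
move=> F_ge; rewrite -sum1_card.
apply: (big_rec2 (fun b a => INR b * c <= INR a)) => [|i b a Pi IH]; first by simpl; lra.
have := F_ge i Pi; rewrite !plus_INR /=; lra.
Qed.

Lemma markov_count (I : finType) (B : {set I}) (F : I -> nat) (t : R) :
  (forall i, i \in B -> t <= INR (F i)) -> INR #|B| * t <= INR (\sum_i F i).
Proof.
move=> F_ge; apply: Rle_trans (INR_sum_ge F_ge) _.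
by apply/leq_INR/leq_sum_subset.
Qed.

Lemma exp_le_exp x y : x <= y -> exp x <= exp y.
Proof. by case=> [/exp_increasing/Rlt_le | ->] //; exact: Rle_refl. Qed.

Lemma exp_le_1m q : 0 <= q <= / 2 -> exp (- (2 * q)) <= 1 - q.
Proof.
move=> q_bd; have := exp_ineq1_le (2 * q); have := exp_pos (2 * q).
rewrite exp_Ropp; set e := exp (2 * q) => e_pos e_ge.
apply: (Rmult_le_reg_r e) => //; rewrite Rinv_l; nra.
Qed.

Lemma exists_low_codegree (T1 T2 : finType) (E : T1 -> T2 -> bool)
    (W : {set T1}) (Y : {set T2}) (c : R) :
  (0 < #|Y|)%nat -> (forall x, x \in W -> INR (deg_in E Y x) <= c * INR #|Y|) ->
  exists2 y, y \in Y & INR (deg_in (transpose E) W y) <= c * INR #|W|.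
Proof.
case/card_gt0P=> y0 y0Y W_sparse.
have [y yY y_min] := arg_minnP (deg_in (transpose E) W) y0Y.
exists y => //.
have Y_pos : 0 < INR #|Y| by apply/lt_0_INR/ltP/card_gt0P; exists y.
have sum_ge := INR_sum_ge (fun z zY => leq_INR (y_min z zY)).
rewrite sum_deg_in_transpose in sum_ge.
have sum_le := INR_sum_le W_sparse.
apply: (Rmult_le_reg_l (INR #|Y|)) => //; lra.
Qed.

Lemma greedy_anticomplete (T1 T2 : finType) (E : T1 -> T2 -> bool)
    (X : {set T1}) (Y : {set T2}) (q : R) (k : nat) :
  0 <= q <= / 2 ->
  (forall x, x \in X -> 2 * INR (deg_in E Y x) <= q * INR #|Y|) ->
  (2 * k <= #|Y|)%nat ->
  exists (W : {set T1}) (T : {set T2}),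
    [/\ W \subset X, T \subset Y, #|T| = k, anticomplete E W T &
        INR #|X| * exp (- (2 * q * INR k)) <= INR #|W|].
Proof.
move=> q_bd X_sparse; elim: k => [|k IH] k_le.
  exists X, set0; split; rewrite ?sub0set ?cards0 //; first by move=> x y _; rewrite inE.
  by rewrite /= Rmult_0_r Ropp_0 exp_0 Rmult_1_r; exact: Rle_refl.
have [W [T [sWX sTY cT WT W_large]]] : exists W T, _ := IH ltac:(lia).
set Y' := Y :\: T.
have cY' : #|Y'| = (#|Y| - k)%nat by rewrite cardsD (setIidPr sTY) cT.
have W_sparse : forall x, x \in W -> INR (deg_in E Y' x) <= q * INR #|Y'|.
  move=> x xW; have := X_sparse x (subsetP sWX x xW).
  have := leq_INR (deg_inS E x (subsetDl Y T)).
  have /leq_INR : (#|Y| <= 2 * #|Y'|)%nat by rewrite cY'; lia.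
  rewrite mult_INR /= -/Y'; nra.
have Y'_pos : (0 < #|Y'|)%nat by rewrite cY'; lia.
have [y yY' y_low] := exists_low_codegree Y'_pos W_sparse.
move: yY'; rewrite inE => /andP [yT yY].
exists (W :\: [set x | E x y]), (y |: T); split.
- exact: subset_trans (subsetDl _ _) sWX.
- by rewrite subUset sub1set yY sTY.
- by rewrite cardsU1 yT cT.
- move=> x z; rewrite !inE => /andP [xNy xW] /orP [/eqP -> // | zT].
  exact: WT.
- have nbW : (deg_in (transpose E) W y <= #|W|)%nat by exact/subset_leq_card/subsetIl.
  rewrite cardsD minus_INR; last exact/leP.
  rewrite S_INR Rmult_plus_distr_l Ropp_plus_distr exp_plus Rmult_1_r.
  have e_pos := exp_pos (- (2 * q)).
  have := Rmult_le_compat_r _ _ _ (Rlt_le _ _ e_pos) W_large.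
  have := Rmult_le_compat_l _ _ _ (pos_INR #|W|) (exp_le_1m q_bd).
  rewrite /deg_in /transpose in y_low *; lra.
Qed.

Lemma sqr_le_4exp x : 0 <= x -> x * x <= 4 * exp x.
Proof.
move=> x_ge0; have := exp_ineq1_le (x / 2).
have -> : exp x = exp (x / 2) * exp (x / 2) by rewrite -exp_plus; congr exp; field.
nra.
Qed.

Lemma exists_nat_ceil x : 0 <= x -> exists k : nat, x <= INR k <= x + 1.
Proof.
move=> x_ge0; have [up_gt up_le] := archimed x.
have up_ge0 : (0 <= up x)%Z by apply: le_IZR; lra.
by exists (Z.to_nat (up x)); rewrite INR_IZR_INZ Znat.Z2Nat.id //; lra.
Qed.

Lemma exists_ramsey_size (C L : R) :
  0 <= C -> 0 <= L -> exists k : nat, C * log2 (exp L) <= INR k <= 2 * C * L + 1.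
Proof.
move=> C_ge0 L_ge0; have ln2_gt := ln_lt_2.
have log2_le : log2 (exp L) <= 2 * L.
  rewrite /log2 ln_exp; apply: (Rmult_le_reg_r (ln 2)); first lra.
  rewrite /Rdiv Rmult_assoc Rinv_l; nra.
have log2_ge0 : 0 <= log2 (exp L).
  rewrite /log2 ln_exp /Rdiv; apply: Rmult_le_pos => //.
  by apply/Rlt_le/Rinv_0_lt_compat; lra.
have [k k_bd] := exists_nat_ceil (Rmult_le_pos _ _ C_ge0 log2_ge0).
by exists k; nra.
Qed.

Lemma ramsey_size_small (C L : R) (k : nat) :
  1 < C -> 1000 * C <= L -> INR k <= 2 * C * L + 1 -> 12 * INR k <= exp (L / 2 - / 4).
Proof.
move=> C_gt1 L_ge k_le; have := @sqr_le_4exp (L / 2 - / 4) ltac:(lra).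
nra.
Qed.

Section LowDegreeSet.

Variables (C L1 L2 : R) (V1 V2 : finType) (E : V1 -> V2 -> bool) (A : {set V1}).
Variables k1 k2 : nat.
Hypothesis C_gt1 : 1 < C.
Hypotheses (V1_exp : INR #|V1| = exp L1) (V2_exp : INR #|V2| = exp L2).
Hypotheses (L1_large : 1000 * C <= L1) (L2_large : 1000 * C <= L2).
Hypotheses (k1_le : INR k1 <= 2 * C * L1 + 1) (k2_le : INR k2 <= 2 * C * L2 + 1).
Hypothesis A_low : forall v, v \in A -> 32 * C * INR (deg1 E v) <= INR #|V2|.
Hypothesis A_large : INR #|V1| <= 6 * INR #|A|.

Let k1_small := ramsey_size_small C_gt1 L1_large k1_le.
Let k2_small := ramsey_size_small C_gt1 L2_large k2_le.

Lemma anticomplete_pair_of_le :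
  (#|V2| <= #|V1|)%nat ->
  exists W T, [/\ anticomplete E W T, (k1 <= #|W|)%nat & (k2 <= #|T|)%nat].
Proof.
move=> /leq_INR; rewrite V1_exp V2_exp => exp_le.
have L21 : L2 <= L1 by apply: Rnot_lt_le => /exp_increasing; lra.
set q := / (16 * C).
have q_def : 16 * C * q = 1 by rewrite /q; field; lra.
have q_bd : 0 <= q <= / 2.
  by split; rewrite /q; [apply/Rlt_le/Rinv_0_lt_compat | apply: Rinv_le_contravar]; lra.
have A_sparse : forall x, x \in A -> 2 * INR (deg_in E [set: V2] x) <= q * INR #|[set: V2]|.
  move=> x /A_low x_low; have := Rmult_le_compat_l q _ _ (proj1 q_bd) x_low.
  rewrite deg_inT cardsT.
  have -> : q * (32 * C * INR (deg1 E x)) = 2 * INR (deg1 E x) * (16 * C * q) by ring.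
  by rewrite q_def; lra.
have k2_le_V2 : (2 * k2 <= #|[set: V2]|)%nat.
  apply: INR_leq; rewrite mult_INR cardsT V2_exp /=.
  have : exp (L2 / 2 - / 4) <= exp L2 by apply: exp_le_exp; lra.
  have := pos_INR k2; have := k2_small; lra.
have [W [T [sWA _ cT WT W_large]]] := greedy_anticomplete q_bd A_sparse k2_le_V2.
exists W, T; split => //; last by rewrite cT.
apply: INR_leq.
have q_k2 : 2 * q * INR k2 <= L1 / 4 + / 8.
  have := Rmult_le_compat_l (2 * q) _ _ ltac:(lra) k2_le.
  have -> : 2 * q * (2 * C * L2 + 1) = L2 / 4 * (16 * C * q) + 2 * q by field.
  rewrite q_def; nra.
have e_q := exp_le_exp (Ropp_le_contravar _ _ q_k2).
have := Rmult_le_compat_l _ _ _ (pos_INR #|A|) e_q.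
have := Rmult_le_compat_r _ _ _ (Rlt_le _ _ (exp_pos (- (L1 / 4 + / 8)))) A_large.
rewrite V1_exp -exp_plus.
have : exp (L1 / 2 - / 4) <= exp (L1 + - (L1 / 4 + / 8)) by apply: exp_le_exp; lra.
have := pos_INR k1; have := k1_small; lra.
Qed.

Lemma anticomplete_pair_of_lt :
  (#|V1| < #|V2|)%nat ->
  exists W T, [/\ anticomplete E W T, (k1 <= #|W|)%nat & (k2 <= #|T|)%nat].
Proof.
move=> /ltnW /leq_INR; rewrite V1_exp V2_exp => exp_le.
have L12 : L1 <= L2 by apply: Rnot_lt_le => /exp_increasing; lra.
have A_pos : 0 < INR #|A| by have := exp_pos L1; lra.
set f := deg_in (transpose E) A.
set V2' := [set y | Rle_dec (16 * C * INR (f y)) (INR #|A|)].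
have bad_few : INR #|~: V2'| * (INR #|A| / (16 * C)) <= INR #|A| * (INR #|V2| / (32 * C)).
  apply: Rle_trans (markov_count (F := f) _) _.
    move=> y; rewrite !inE; case: Rle_dec => // /Rnot_le_lt y_bad _.
    by apply: Rle_div_l; lra.
  have -> : \sum_y f y = \sum_(x in A) deg_in E [set: V2] x.
    by rewrite -sum_deg_in_transpose; apply: eq_bigl => y; rewrite inE.
  by apply: INR_sum_le => x /A_low; rewrite deg_inT; apply: Rle_div_r; lra.
have V2'_large : INR #|V2| <= 2 * INR #|V2'|.
  rewrite Rmult_comm (_ : INR #|A| * _ = INR #|A| / (16 * C) * (INR #|V2| / 2)) in bad_few;
    last by field; lra.
  have /Rmult_le_reg_l/(_ bad_few) : 0 < INR #|A| / (16 * C).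
    by apply: Rdiv_lt_0_compat; lra.
  have := cardsC V2'; move/(f_equal INR); rewrite plus_INR; lra.
set q := / (8 * C).
have q_def : 8 * C * q = 1 by rewrite /q; field; lra.
have q_bd : 0 <= q <= / 2.
  by split; rewrite /q; [apply/Rlt_le/Rinv_0_lt_compat | apply: Rinv_le_contravar]; lra.
have V2'_sparse : forall y, y \in V2' -> 2 * INR (f y) <= q * INR #|A|.
  move=> y; rewrite inE; case: Rle_dec => // y_good _.
  have := Rmult_le_compat_l q _ _ (proj1 q_bd) y_good.
  have -> : q * (16 * C * INR (f y)) = 2 * INR (f y) * (8 * C * q) by ring.
  by rewrite q_def; lra.
have k1_le_A : (2 * k1 <= #|A|)%nat.
  apply: INR_leq; rewrite mult_INR /=.
  have : exp (L1 / 2 - / 4) <= exp L1 by apply: exp_le_exp; lra.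
  have := pos_INR k1; have := k1_small; lra.
have [W [T [sWV _ cT WT W_large]]] := greedy_anticomplete q_bd V2'_sparse k1_le_A.
exists T, W; split; [exact: anticomplete_transpose | by rewrite cT | apply: INR_leq].
have q_k1 : 2 * q * INR k1 <= L2 / 2 + / 4.
  have := Rmult_le_compat_l (2 * q) _ _ ltac:(lra) k1_le.
  have -> : 2 * q * (2 * C * L1 + 1) = L1 / 2 * (8 * C * q) + 2 * q by field.
  rewrite q_def; nra.
have e_q := exp_le_exp (Ropp_le_contravar _ _ q_k1).
have := Rmult_le_compat_l _ _ _ (pos_INR #|V2'|) e_q.
have := Rmult_le_compat_r _ _ _ (Rlt_le _ _ (exp_pos (- (L2 / 2 + / 4)))) V2'_large.
rewrite V2_exp -exp_plus.
have : exp (L2 / 2 - / 4) <= exp (L2 + - (L2 / 2 + / 4)) by apply: exp_le_exp; lra.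
have := pos_INR k2; have := k2_small; lra.
Qed.

Lemma low_degree_anticomplete_pair :
  exists W T, [/\ anticomplete E W T, (k1 <= #|W|)%nat & (k2 <= #|T|)%nat].
Proof.
by case: (leqP #|V2| #|V1|) => [/anticomplete_pair_of_le | /anticomplete_pair_of_lt].
Qed.

End LowDegreeSet.

Lemma exists_exp_ge (a x : R) : exp a < x -> exists2 L, x = exp L & a <= L.
Proof.
move=> a_x; have x_pos : 0 < x by have := exp_pos a; lra.
exists (ln x); first by rewrite exp_ln.
by rewrite -(ln_exp a); apply/Rlt_le/ln_increasing => //; exact: exp_pos.
Qed.

Lemma few_low_degree (C : R) (V1 V2 : finType) (E : V1 -> V2 -> bool) (A : {set V1}) :
  1 < C -> bipartite_ramsey C E ->
  exp (1000 * C) < INR #|V1| -> exp (1000 * C) < INR #|V2| ->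
  (forall v, v \in A -> 32 * C * INR (deg1 E v) <= INR #|V2|) ->
  (6 * #|A| <= #|V1|)%nat.
Proof.
move=> C_gt1 ramsey /exists_exp_ge [L1 V1_exp L1_large] /exists_exp_ge [L2 V2_exp L2_large].
move=> A_low; rewrite leqNgt; apply/negP => /ltnW /leq_INR A_large.
have {}A_large : INR #|V1| <= 6 * INR #|A|.
  by rewrite mult_INR (_ : INR 6 = 6) in A_large; last by simpl; lra.
have [k1 [k1_ge k1_le]] := @exists_ramsey_size C L1 ltac:(lra) ltac:(lra).
have [k2 [k2_ge k2_le]] := @exists_ramsey_size C L2 ltac:(lra) ltac:(lra).
have [W [T [WT k1_W k2_T]]] :=
  low_degree_anticomplete_pair C_gt1 V1_exp V2_exp L1_large L2_large k1_le k2_le A_low A_large.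
rewrite -V1_exp in k1_ge; rewrite -V2_exp in k2_ge.
by have := ramsey_anticomplete_small ramsey k1_ge k2_ge WT k1_W; rewrite ltnNge k2_T.
Qed.

Lemma deg1_balanced (C : R) (V1 V2 : finType) (E : V1 -> V2 -> bool) v :
  0 < C ->
  INR #|V2| <= 32 * C * INR (deg1 E v) ->
  INR #|V2| <= 32 * C * INR (deg1 (fun x y => ~~ E x y) v) ->
  INR #|V2| / (32 * C) <= INR (deg1 E v) <= (1 - / (32 * C)) * INR #|V2|.
Proof.
move=> C_pos hi; rewrite deg1_compl minus_INR; last exact/leP/max_card.
have C32_pos : 0 < 32 * C by lra.
move/(Rle_div_l C32_pos) => lo; split; first exact: Rle_div_l.
have -> : (1 - / (32 * C)) * INR #|V2| = INR #|V2| - INR #|V2| / (32 * C) by field; lra.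
lra.
Qed.

Local Close Scope R_scope.

Theorem corollary2p2 :
  forall C : R, (C > 1)%R ->
  exists nC : nat,
    forall (V1 V2 : finType) (E : V1 -> V2 -> bool),
      bipartite_ramsey C E ->
      nC <= #|V1| -> nC <= #|V2| ->
      exists S : {set V1},
        (3 * #|S| >= 2 * #|V1|)%N /\
        forall v, v \in S ->
          (INR #|V2| / (32 * C) <= INR (deg1 E v))%R /\
          (INR (deg1 E v) <= (1 - / (32 * C)) * INR #|V2|)%R.
Proof.
move=> C C_gt1; have [nC nC_large] := INR_unbounded (exp (1000 * C)).
exists nC => V1 V2 E ramsey n1_ge n2_ge.
have V_large n : nC <= n -> (exp (1000 * C) < INR n)%R by move/leq_INR; lra.
pose low (E' : V1 -> V2 -> bool) := [set v | Rlt_dec (32 * C * INR (deg1 E' v)) (INR #|V2|)].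
have low_few (E' : V1 -> V2 -> bool) : bipartite_ramsey C E' -> 6 * #|low E'| <= #|V1|.
  move=> ramsey'; apply: few_low_degree ramsey' (V_large _ n1_ge) (V_large _ n2_ge) _ => //.
  by move=> v; rewrite inE; case: Rlt_dec => // lt _; apply: Rlt_le.
have := low_few _ ramsey; have := low_few _ (bipartite_ramsey_compl ramsey).
set A1 := low E; set A2 := low _ => A2_few A1_few.
exists (~: (A1 :|: A2)); split.
  by have := cardsC (A1 :|: A2); have := cardsU A1 A2; lia.
move=> v; rewrite !inE negb_or => /andP [].
case: Rlt_dec => // hi _; case: Rlt_dec => // lo _.
apply: deg1_balanced; lra.
Qed.
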